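(* Let $X,X_1,X_2,\dots$ be real random variables on a probability space $(\Omega,\mathcal{F},P)$. Suppose that for every $\varepsilon>0$, $\sum_{n=1}^\infty P(|X_n-X|\ge\varepsilon)<\infty$, and that for some $\varepsilon>0$, $\sum_{n=1}^\infty E\big[|X_n-X|\,I_{\{|X_n-X|<\varepsilon\}}\big]<\infty$. Then for every bounded Lipschitz continuous function $f:\mathbb{R}\to\mathbb{R}$, $\sum_{n=1}^\infty E[|f(X_n)-f(X)|]<\infty$. Consequently, for every bounded Lipschitz continuous function $f:\mathbb{R}\to\mathbb{R}$, $\sum_{n=1}^\infty |E[f(X_n)-f(X)]|<\infty$.
   Context: $I_A$ denotes the indicator function of the event $A$. *)

From HB Require Import structures.
From mathcomp Require Import all_boot all_order all_algebra.
From mathcomp Require Import all_classical all_reals all_analysis.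
Set Implicit Arguments. Unset Strict Implicit. Unset Printing Implicit Defensive.
Import Order.TTheory GRing.Theory Num.Theory.
Local Open Scope ring_scope.

Definition lipschitz_fun (R : realType) (f : R -> R) : Prop :=
  exists L : R, forall x y, `|f x - f y| <= L * `|x - y|.

From HB Require Import structures.
From mathcomp Require Import all_boot all_order all_algebra.
From mathcomp Require Import all_classical all_reals all_analysis.
From mathcomp Require Import measurable_realfun.
Import numFieldTopology.Exports.
Import Order.TTheory GRing.Theory Num.Theory.
Local Open Scope classical_set_scope.
Local Open Scope ring_scope.

(* If |f| <= M and f is L-Lipschitz, then pointwise
   |f(X_n) - f(X)| <= |L| |X_n - X| 1{|X_n - X| < eps} + 2 M 1{|X_n - X| >= eps};
   taking expectations and summing over n, the right-hand side is a nonnegative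
   combination of the two series assumed finite.  The second claim follows from
   |E g| <= E |g|. *)

Section real_functions.
Context {R : realType}.

Lemma bounded_fun_ex_bound (f : R -> R) : bounded_fun f ->
  exists M, forall x, `|f x| <= M.
Proof.
move=> [M [_ fM]]; exists (`|M| + 1) => x; apply: fM => //.
by rewrite (le_lt_trans (ler_norm M)) // ltrDl.
Qed.

Lemma lipschitz_fun_continuous (f : R -> R) : lipschitz_fun f -> continuous f.
Proof.
move=> [L fL] x; apply/cvgrPdist_le => e e0.
have L1_gt0 : 0 < `|L| + 1 by rewrite ltr_wpDl.
apply/nbhs_normP; exists (e / (`|L| + 1)); first by rewrite /= divr_gt0.
move=> z /= xz; rewrite (le_trans (fL x z)) //.
rewrite (@le_trans _ _ ((`|L| + 1) * `|x - z|)) //.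
  by rewrite ler_wpM2r // (le_trans (ler_norm L)) // lerDl.
by rewrite -ler_pdivlMl // mulrC ltW.
Qed.

Lemma lipschitz_bounded_diff_le (f : R -> R) (L M eps x y : R) :
  (forall z, `|f z| <= M) -> (forall u v, `|f u - f v| <= L * `|u - v|) ->
  `|f y - f x| <= if `|y - x| < eps then `|L| * `|y - x| else 2 * M.
Proof.
move=> fM fL; case: ifP => _.
  by rewrite (le_trans (fL _ _)) // ler_wpM2r // ler_norm.
by rewrite (le_trans (ler_normB _ _)) // mulr2n mulrDl mul1r lerD.
Qed.

End real_functions.

Lemma nneseriesDZl_lty {R : realType} {k1 k2 : R} {a b : nat -> \bar R} {m : nat} :
  0 <= k1 -> 0 <= k2 -> (forall n, (0 <= a n)%E) -> (forall n, (0 <= b n)%E) ->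
  (\sum_(m <= n <oo) a n < +oo)%E -> (\sum_(m <= n <oo) b n < +oo)%E ->
  (\sum_(m <= n <oo) (k1%:E * a n + k2%:E * b n) < +oo)%E.
Proof.
move=> k1_ge0 k2_ge0 a_ge0 b_ge0 a_lty b_lty.
rewrite nneseriesD; last 2 first.
- by move=> n _ _; rewrite mule_ge0.
- by move=> n _ _; rewrite mule_ge0.
rewrite !nneseriesZl //.
by rewrite lte_add_pinfty // lte_mul_pinfty.
Qed.

Section expectation_bounds.
Context d (T : measurableType d) (R : realType) (P : probability T R).

Lemma measurable_set_ltr (h : T -> R) (e : R) :
  measurable_fun setT h -> measurable [set w | h w < e].
Proof.
move=> mh; have := mh measurableT _ (measurable_itv `]-oo, e[).
by rewrite setTI; congr measurable; apply/seteqP; split => w /=; rewrite in_itv.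
Qed.

Lemma measurable_set_ler (h : T -> R) (e : R) :
  measurable_fun setT h -> measurable [set w | e <= h w].
Proof.
move=> mh; have := mh measurableT _ (measurable_itv `[e, +oo[).
rewrite setTI; congr measurable; apply/seteqP; split => w /=;
  by rewrite in_itv /= andbT.
Qed.

Lemma indic_ltr_ler_combination (h : T -> R) (eps u v : R) (w : T) :
  u * (h w * \1_[set w' | h w' < eps] w) + v * \1_[set w' | eps <= h w'] w =
  if h w < eps then u * h w else v.
Proof.
rewrite !indicE; have [hw_lt|hw_ge] := ltP (h w) eps.
- rewrite mem_set // memNset /=; last by rewrite leNgt hw_lt.
  by rewrite mulr1 mulr0 addr0.
- rewrite memNset /=; last by rewrite ltNge hw_ge.
  by rewrite mem_set // mulr0 mulr0 add0r mulr1.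
Qed.

Lemma ge0_expectationD (g h : T -> R) :
  measurable_fun setT g -> measurable_fun setT h ->
  (forall w, 0 <= g w) -> (forall w, 0 <= h w) ->
  ('E_P[g \+ h] = 'E_P[g] + 'E_P[h])%E.
Proof.
move=> mg mh g_ge0 h_ge0; rewrite unlock /= -ge0_integralD //.
- by move=> w _; rewrite lee_fin.
- exact/measurable_EFinP.
- by move=> w _; rewrite lee_fin.
- exact/measurable_EFinP.
Qed.

Lemma ge0_expectationZl (k : R) (g : T -> R) :
  0 <= k -> measurable_fun setT g -> (forall w, 0 <= g w) ->
  ('E_P[fun w => (k * g w)%R] = k%:E * 'E_P[g])%E.
Proof.
move=> k_ge0 mg g_ge0; rewrite unlock -ge0_integralZl_EFin //.
- by move=> w _; rewrite lee_fin.
- exact/measurable_EFinP.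
Qed.

Lemma abse_expectation_le (g : T -> R) : measurable_fun setT g ->
  (`|'E_P[g]| <= 'E_P[fun w => `|g w|%R])%E.
Proof. by move=> mg; rewrite !unlock le_abse_integral //; exact/measurable_EFinP. Qed.

Lemma expectation_lipschitz_bounded_diff_le (f : R -> R) (L M eps : R)
    (X Y : {RV P >-> R}) :
  (forall z, `|f z| <= M) -> (forall u v, `|f u - f v| <= L * `|u - v|) ->
  ('E_P[fun w => `|f (Y w) - f (X w)|%R] <=
   `|L|%:E * 'E_P[fun w => (`|Y w - X w| * \1_[set w' | `|Y w' - X w'| < eps] w)%R]
   + (2 * M)%:E * P [set w | (eps <= `|Y w - X w|)%R])%E.
Proof.
move=> fM fL; set h := fun w => `|Y w - X w|.
have M_ge0 : 0 <= M := le_trans (normr_ge0 _) (fM 0).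
have mh : measurable_fun setT h by apply: measurableT_comp => //; exact: measurable_funB.
have mf : measurable_fun setT f.
  by apply: continuous_measurable_fun; apply: lipschitz_fun_continuous; exists L.
have mlt := measurable_set_ltr _ eps mh.
have mge := measurable_set_ler _ eps mh.
set a := fun w => h w * \1_[set w' | h w' < eps] w.
set b : T -> R := \1_[set w | eps <= h w].
have ma : measurable_fun setT a by apply: measurable_funM => //; exact: measurable_indic.
have mb : measurable_fun setT b by exact: measurable_indic.
have a_ge0 w : 0 <= a w by rewrite /a /h mulr_ge0.
have b_ge0 w : 0 <= b w by rewrite /b indicE.
have mLa : measurable_fun setT (fun w => `|L| * a w) by exact: measurable_funM.
have mMb : measurable_fun setT (fun w => 2 * M * b w) by exact: measurable_funM.
have La_ge0 w : 0 <= `|L| * a w by rewrite mulr_ge0.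
have Mb_ge0 w : 0 <= 2 * M * b w by rewrite !mulr_ge0.
rewrite -expectation_indic // -!ge0_expectationZl ?mulr_ge0 // -ge0_expectationD //.
apply: expectation_le => //.
- by apply: measurableT_comp => //; apply: measurable_funB; exact: measurableT_comp.
- exact: measurable_funD.
- by move=> w; rewrite addr_ge0.
apply: aeW => w /=; rewrite /a /b indic_ltr_ler_combination.
exact: lipschitz_bounded_diff_le.
Qed.

End expectation_bounds.

Theorem proposition3p3 (d : measure_display) (T : measurableType d)
  (R : realType) (P : probability T R)
  (X : {RV P >-> R}) (Xn : nat -> {RV P >-> R}) :
  (forall eps : R, 0 < eps ->
     (\sum_(1 <= n <oo) P [set w | (eps <= `|Xn n w - X w|)%R] < +oo)%E) ->
  (exists eps : R, 0 < eps /\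
     (\sum_(1 <= n <oo)
        'E_P[fun w => (`|Xn n w - X w| * \1_[set w' | `|Xn n w' - X w'| < eps] w)%R]
        < +oo)%E) ->
  (forall f : R -> R, bounded_fun f -> lipschitz_fun f ->
     (\sum_(1 <= n <oo) 'E_P[fun w => `|f (Xn n w) - f (X w)|%R] < +oo)%E)
  /\
  (forall f : R -> R, bounded_fun f -> lipschitz_fun f ->
     (\sum_(1 <= n <oo) `|'E_P[fun w => (f (Xn n w) - f (X w))%R]| < +oo)%E).
Proof.
move=> tails_lty [eps [eps_gt0 trunc_lty]].
have abs_lty f : bounded_fun f -> lipschitz_fun f ->
    (\sum_(1 <= n <oo) 'E_P[fun w => `|f (Xn n w) - f (X w)|%R] < +oo)%E.
  move=> /bounded_fun_ex_bound[M fM] [L fL].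
  have M_ge0 : 0 <= M := le_trans (normr_ge0 _) (fM 0).
  have trunc_ge0 n : (0 <= 'E_P[fun w =>
      (`|Xn n w - X w| * \1_[set w' | `|Xn n w' - X w'| < eps] w)%R])%E.
    by apply: expectation_ge0 => w; rewrite mulr_ge0 // indicE.
  apply: (le_lt_trans _ (nneseriesDZl_lty (normr_ge0 L) (mulr_ge0 (ler0n _ 2) M_ge0)
    trunc_ge0 (fun n => measure_ge0 _ _) trunc_lty (tails_lty _ eps_gt0))) => //.
  apply: lee_nneseries => [n _ _|n _]; first exact: expectation_ge0.
  exact: expectation_lipschitz_bounded_diff_le.
split=> // f bf lf; apply: (le_lt_trans _ (abs_lty f bf lf)).
apply: lee_nneseries => // n _; apply: abse_expectation_le.
have mf : measurable_fun setT f.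
  by apply: continuous_measurable_fun; exact: lipschitz_fun_continuous.
by apply: measurable_funB; exact: measurableT_comp.
Qed.
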